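(* Let $\mathcal S$ be a finite set, let $\kappa$ be a real symmetric $\mathcal S\times\mathcal S$ matrix with nonnegative entries, and let $\mu,c\in(0,\infty)^{\mathcal S}$ with $c_i<\mu_i$ for all $i$. Assume $D_c^{-1}-\kappa$ is positive definite, and set $\Phi=(D_c^{-1}-\kappa)^{-1}$, \[ A_0=(I-\kappa D_c)\,D_{\mu-c}^{-1}\,(I-D_\mu\kappa),\qquad A=\tfrac12(A_0+A_0^T). \] Let $k\in\mathbb N^{\mathcal S}$ and $h>0$ be such that $\Phi-h\,kk^T$ is positive definite, and let $B_k=(\Phi-h\,kk^T)^{-1}$. If \[ h\,k^T(D_\mu^{-1}-\kappa)k<1, \] then $A+B_k$ is positive definite.
   Context: For a vector $x\in\mathbb R^{\mathcal S}$, $D_x$ denotes the diagonal matrix with diagonal entries $x_i$; $\mu-c$ is the componentwise difference; $I$ is the identity matrix. (In the paper $h=h(k)$ is the limiting density of components of type vector $k$, but only $h>0$ and the stated conditions are used.) *)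

From mathcomp Require Import all_boot all_order all_algebra.
Set Implicit Arguments. Unset Strict Implicit. Unset Printing Implicit Defensive.
Import Order.TTheory GRing.Theory Num.Theory.
Local Open Scope ring_scope.

Definition posdef (R : realFieldType) (n : nat) (M : 'M[R]_n) : Prop :=
  M^T = M /\ forall x : 'cV[R]_n, x != 0 -> 0 < (x^T *m M *m x) 0 0.

Definition Dg (R : realFieldType) (n : nat) (x : 'I_n -> R) : 'M[R]_n :=
  diag_mx (\row_i x i).

From mathcomp Require Import all_boot all_order all_algebra.
From mathcomp Require Import ring lra.
Import Order.TTheory GRing.Theory Num.Theory.
Local Open Scope ring_scope.

(* Write M := D_c^-1 - kappa and e_i := c_i mu_i / (mu_i - c_i). Expanding shows
   A_0 = M D_e M - M, so A = A_0 when kappa is symmetric. By Sherman-Morrison,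
   B_k = M + t (M k)(M k)^T with t = h / (1 - h k^T M k), and testing the positive
   definiteness of Phi - h k k^T at the vector M k shows 1 - h k^T M k > 0, i.e.
   t >= 0. Hence A + B_k = M D_e M + t (M k)(M k)^T, which is positive definite
   because D_e is a positive diagonal matrix and M is invertible. *)

Section Matrices.
Context {R : realFieldType} {n : nat}.
Implicit Types (x y d : 'I_n -> R) (v : 'cV[R]_n).

Lemma Dg_ext x y : x =1 y -> Dg x = Dg y.
Proof. by move=> xy; congr diag_mx; apply/rowP=> i; rewrite !mxE xy. Qed.

Lemma Dg1 : Dg (fun _ => 1) = 1%:M :> 'M[R]_n.
Proof. by rewrite /Dg -diag_const_mx; congr diag_mx; apply/rowP=> i; rewrite !mxE. Qed.

Lemma Dg_mul x y : Dg x *m Dg y = Dg (fun i => x i * y i).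
Proof. by rewrite /Dg mulmx_diag; congr diag_mx; apply/rowP=> i; rewrite !mxE. Qed.

Lemma Dg_mul1 x y : (forall i, x i * y i = 1) -> Dg x *m Dg y = 1%:M.
Proof. by move=> xy1; rewrite Dg_mul -Dg1; apply: Dg_ext. Qed.

Lemma Dg_sub x y : Dg x - Dg y = Dg (fun i => x i - y i).
Proof. by apply/matrixP=> i j; rewrite !mxE mulrnBl. Qed.

Lemma trmx_Dg x : (Dg x)^T = Dg x.
Proof. exact: tr_diag_mx. Qed.

Lemma qform_Dg d v : (v^T *m Dg d *m v) 0 0 = \sum_i d i * v i 0 ^+ 2.
Proof. by rewrite /Dg mul_mx_diag !mxE; apply: eq_bigr => i _; rewrite !mxE; ring. Qed.

Lemma qform_Dg_gt0 d v : (forall i, 0 < d i) -> v != 0 -> 0 < (v^T *m Dg d *m v) 0 0.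
Proof.
move=> d_gt0 v_neq0; rewrite qform_Dg.
have [i vi_neq0 | v_eq0] := pickP (fun i => v i 0 != 0); last first.
  by case/eqP: v_neq0; apply/matrixP=> i j; rewrite ord1 mxE; apply/eqP/negbFE.
rewrite (bigD1 i) //=; apply: ltr_pwDl; first by rewrite mulr_gt0 ?exprn_even_gt0.
by apply: sumr_ge0 => j _; rewrite mulr_ge0 ?sqr_ge0 // ltW.
Qed.

Implicit Types (M P Q : 'M[R]_n) (u w : 'cV[R]_n).

Lemma posdef_unitmx M : posdef M -> M \in unitmx.
Proof.
case=> _ M_pos; rewrite unitmxE unitfE; apply/negP => /det0P [v v_neq0 vM].
by move: (M_pos v^T); rewrite trmx_eq0 v_neq0 trmxK vM mul0mx mxE ltxx => /(_ isT).
Qed.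

Lemma qform_rank1 w v : (v^T *m (w *m w^T) *m v) 0 0 = (w^T *m v) 0 0 ^+ 2.
Proof.
set s := (w^T *m v) 0 0.
have wTv : w^T *m v = s%:M by apply: mx11_scalar.
have vTw : v^T *m w = s%:M by rewrite -[v^T *m w]trmxK trmx_mul trmxK wTv tr_scalar_mx.
by rewrite !mulmxA vTw -mulmxA wTv -scalar_mxM mxE eqxx mulr1n expr2.
Qed.

Lemma posdef_congr_Dg M d :
  M^T = M -> M \in unitmx -> (forall i, 0 < d i) -> posdef (M *m Dg d *m M).
Proof.
move=> MT M_unit d_gt0; split; first by rewrite !trmx_mul trmx_Dg MT mulmxA.
move=> v v_neq0; have Mv_neq0 : M *m v != 0.
  by apply: contra v_neq0 => /eqP Mv0; rewrite -(mulKmx M_unit v) Mv0 mulmx0.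
by move: (qform_Dg_gt0 _ _ d_gt0 Mv_neq0); rewrite trmx_mul MT !mulmxA.
Qed.

Lemma posdef_add_rank1 P t w : posdef P -> 0 <= t -> posdef (P + t *: (w *m w^T)).
Proof.
case=> PT P_pos t_ge0; split.
  by rewrite linearD /= PT linearZ /= trmx_mul trmxK.
move=> v v_neq0; rewrite mulmxDr mulmxDl -scalemxAr -scalemxAl.
have b_ge0 : 0 <= (v^T *m (w *m w^T) *m v) 0 0 by rewrite qform_rank1 sqr_ge0.
have a_gt0 := P_pos v v_neq0.
set a := v^T *m P *m v in a_gt0 *; set b := v^T *m _ *m v in b_ge0 *.
by clearbody a b; rewrite !mxE ltr_wpDr ?mulr_ge0.
Qed.

Lemma mulmx1_invmx P Q : P *m Q = 1%:M -> invmx P = Q.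
Proof.
move=> PQ; have [P_unit _] := mulmx1_unit PQ.
by rewrite -[Q](mulKmx P_unit) PQ mulmx1.
Qed.

Lemma invmx_sub_rank1 P u v h :
  let s := (v^T *m invmx P *m u) 0 0 in
  P \in unitmx -> 1 - h * s != 0 ->
  invmx (P - h *: (u *m v^T)) =
    invmx P + (h / (1 - h * s)) *: (invmx P *m u *m (v^T *m invmx P)).
Proof.
move=> s P_unit hs_neq0; set t := h / (1 - h * s); apply: mulmx1_invmx.
set Q := invmx P; set K := u *m (v^T *m Q).
have vQu : v^T *m Q *m u = s%:M by apply: mx11_scalar.
have uvQu : (h *: (u *m v^T)) *m (t *: (Q *m u *m (v^T *m Q))) = (h * t * s) *: K.
  rewrite -scalemxAl -scalemxAr scalerA.
  have -> : u *m v^T *m (Q *m u *m (v^T *m Q)) = u *m (v^T *m Q *m u) *m (v^T *m Q).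
    by rewrite !mulmxA.
  by rewrite vQu mul_mx_scalar -scalemxAl scalerA.
rewrite mulmxDr !mulmxBl mulmxV // uvQu -scalemxAr !mulmxA mulmxV // mul1mx.
rewrite -scalemxAl -[u *m v^T *m Q]mulmxA -/K.
have ht : t = h + h * t * s by rewrite /t; field.
by rewrite {1}ht scalerDl addrK subrK.
Qed.

Lemma posdef_sub_rank1_coef_gt0 M h u :
  posdef M -> posdef (invmx M - h *: (u *m u^T)) -> 0 < 1 - h * (u^T *m M *m u) 0 0.
Proof.
move=> M_posdef [_ B_pos]; have M_unit : M \in unitmx by apply: posdef_unitmx.
case: M_posdef => MT M_pos.
have [Mu0 | Mu_neq0] := eqVneq (M *m u) 0.
  by rewrite -mulmxA Mu0 mulmx0 mxE mulr0 subr0 ltr01.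
have u_neq0 : u != 0 by apply: contraNneq Mu_neq0 => ->; rewrite mulmx0.
set S := u^T *m M *m u; have s_gt0 : 0 < S 0 0 := M_pos u u_neq0.
(* Testing at M u gives s - h s^2 = s (1 - h s) > 0. *)
have := B_pos _ Mu_neq0.
have -> : (M *m u)^T *m (invmx M - h *: (u *m u^T)) *m (M *m u) = S - h *: (S *m S).
  rewrite trmx_mul MT mulmxBr mulmxBl mulmxA mulmxK // -scalemxAr -scalemxAl.
  by rewrite /S !mulmxA.
clearbody S; rewrite [S]mx11_scalar -scalar_mxM !mxE eqxx !mulr1n in s_gt0 *.
by move: s_gt0; nra.
Qed.

End Matrices.

Section Factorization.
Variables (R : realFieldType) (n : nat) (kappa : 'M[R]_n) (mu c : 'I_n -> R).
Hypotheses (mu_neq0 : forall i, mu i != 0) (c_neq0 : forall i, c i != 0)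
  (mu_neq_c : forall i, mu i - c i != 0).

Let M := Dg (fun i => (c i)^-1) - kappa.
Let e i := c i * mu i / (mu i - c i).

Lemma A0_factor :
  (1%:M - kappa *m Dg c) *m Dg (fun i => (mu i - c i)^-1) *m (1%:M - Dg mu *m kappa)
    = M *m Dg e *m M - M.
Proof.
have left_factor : 1%:M - kappa *m Dg c = M *m Dg c.
  by rewrite /M mulmxBl Dg_mul1 // => i; apply: mulVf.
have right_factor :
    1%:M - Dg mu *m kappa = Dg mu *m (M - Dg (fun i => (c i)^-1 - (mu i)^-1)).
  have -> : M - Dg (fun i => (c i)^-1 - (mu i)^-1) = Dg (fun i => (mu i)^-1) - kappa.
    by rewrite /M addrAC Dg_sub; congr (_ - _); apply: Dg_ext => i; ring.
  by rewrite mulmxBr Dg_mul1 // => i; apply: divff.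
rewrite left_factor right_factor !mulmxA -(mulmxA M (Dg c)) Dg_mul.
rewrite -(mulmxA M _ (Dg mu)) Dg_mul (@Dg_ext _ _ _ e) => [|i]; last first.
  by rewrite /e mulrAC.
rewrite mulmxBr -(mulmxA M (Dg e) (Dg _)) Dg_mul1 ?mulmx1 // => i.
by rewrite /e; field; rewrite c_neq0 mu_neq0 mu_neq_c.
Qed.

End Factorization.

Lemma symmetrize_sym (R : realFieldType) (n : nat) (B : 'M[R]_n) :
  B^T = B -> 2^-1 *: (B + B^T) = B.
Proof. by move->; rewrite -mulr2n -scaler_nat scalerA mulVf ?scale1r ?pnatr_eq0. Qed.

Theorem mainTheorem3 (R : realFieldType) (n : nat)
  (kappa : 'M[R]_n) (mu c : 'I_n -> R) (k : 'I_n -> nat) (h : R) :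
  kappa^T = kappa ->
  (forall i j, 0 <= kappa i j) ->
  (forall i, 0 < mu i) -> (forall i, 0 < c i) -> (forall i, c i < mu i) ->
  posdef (Dg (fun i => (c i)^-1) - kappa) ->
  0 < h ->
  let Phi := invmx (Dg (fun i => (c i)^-1) - kappa) in
  let A0 := (1%:M - kappa *m Dg c) *m Dg (fun i => (mu i - c i)^-1)
              *m (1%:M - Dg mu *m kappa) in
  let A := 2^-1 *: (A0 + A0^T) in
  let kv : 'cV[R]_n := \col_i (k i)%:R in
  posdef (Phi - h *: (kv *m kv^T)) ->
  let Bk := invmx (Phi - h *: (kv *m kv^T)) in
  h * (kv^T *m (Dg (fun i => (mu i)^-1) - kappa) *m kv) 0 0 < 1 ->
  posdef (A + Bk).
Proof.
move=> kappaT _ mu_gt0 c_gt0 c_lt_mu M_posdef h_gt0.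
set M := Dg (fun i => (c i)^-1) - kappa in M_posdef *.
move=> Phi A0 A kv B_posdef Bk _.
have M_unit : M \in unitmx by apply: posdef_unitmx.
have MT : M^T = M by case: M_posdef.
have hs_gt0 := posdef_sub_rank1_coef_gt0 _ _ _ M_posdef B_posdef.
have A0E : A0 = M *m Dg (fun i => c i * mu i / (mu i - c i)) *m M - M.
  by apply: A0_factor => i; rewrite ?subr_eq0 gt_eqF.
have AE : A = A0.
  by apply: symmetrize_sym; rewrite A0E linearB /= !trmx_mul trmx_Dg MT mulmxA.
have BkE : Bk = M + (h / (1 - h * (kv^T *m M *m kv) 0 0)) *: (M *m kv *m (M *m kv)^T).
  by rewrite /Bk invmx_sub_rank1 ?invmxK ?gt_eqF ?unitmx_inv // trmx_mul MT.
rewrite AE A0E BkE addrA subrK.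
apply: posdef_add_rank1; last by rewrite divr_ge0 ?ltW.
by apply: posdef_congr_Dg => // i; rewrite divr_gt0 ?mulr_gt0 ?subr_gt0.
Qed.
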